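(* Let $\nu,\bar\nu\in\mathcal N$ with $\bar\nu\ge\nu$ (i.e. $\bar\nu(I)\ge\nu(I)$ for all measurable $I\subseteq\mathbb R$), and define $M^t_\nu$ and $M^t_{\bar\nu}$ using the same weighted Poisson process. Then $M^t_{\bar\nu}\ge M^t_\nu$ as measures for all $t\ge0$. If moreover $\bar\nu$ and $\nu$ coincide on $(-\infty,0)$, then for every $x\ge0$ the quantity $M^t_{\bar\nu}([0,x])-M^t_\nu([0,x])$ is non-increasing in $t$.
   Context: Let $\mathbf P\subset\mathbb R^2$ be a homogeneous Poisson process of intensity one with i.i.d. positive weights of distribution $F$, independent of $\mathbf P$, where $\int_0^\infty e^{ax}dF(x)<\infty$ for some $a>0$. $L(\mathbf p,\mathbf q)$ is the maximal total weight of a coordinatewise increasing finite sequence of points of $\mathbf P$ in $\{\mathbf x:p_1<x_1\le q_1,\ p_2<x_2\le q_2\}$. For a positive locally finite measure $\nu$ on $\mathbb R$, $\nu(x)=\nu((0,x])$ for $x\ge0$ and $\nu(x)=-\nu((x,0])$ for $x<0$; $\mathcal N$ is the set of such $\nu$ with $\liminf_{y\to-\infty}\nu(y)/y>0$. For $\nu\in\mathcal N$ and $t\ge0$, $L_\nu(x,t)=\sup_{z\le x}\{\nu(z)+L((z,0),(x,t))\}$ and $M^t_\nu((x,y])=L_\nu(y,t)-L_\nu(x,t)$ for $x\le y$ (the Hammersley interacting fluid system started from $\nu$). *)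

From HB Require Import structures.
From mathcomp Require Import all_boot all_order all_algebra.
From mathcomp Require Import all_classical all_reals all_analysis.
Set Implicit Arguments. Unset Strict Implicit. Unset Printing Implicit Defensive.
Import Order.TTheory GRing.Theory Num.Theory.
Local Open Scope classical_set_scope.
Local Open Scope ring_scope.

(* A marked point: ((x1, x2), w) = point (x1,x2) of R^2 carrying weight w. *)
Definition mpoint (R : realType) := ((R * R) * R)%type.

Definition poisson_mass (R : realType) (m : R) (k : nat) : R :=
  expR (- m) * m ^+ k / k`!%:R.

Definition has_card (T : eqType) (S : set T) (k : nat) : Prop :=
  exists s : seq T, uniq s /\ [set` s] = S /\ size s = k.

(* Intensity measure of the independently F-marked homogeneous Poisson process of
   intensity one on R^2: (Lebesgue x Lebesgue) x F on (R*R)*R. *)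
Definition intensity (R : realType) (F : probability R R) : set (mpoint R) -> \bar R :=
  ((@lebesgue_measure R \x @lebesgue_measure R) \x F)%E.

Definition poisson_process (R : realType) (d : measure_display) (Omega : measurableType d)
  (P : probability Omega R) (mu : set (mpoint R) -> \bar R)
  (Xi : Omega -> set (mpoint R)) : Prop :=
  forall (n : nat) (B : 'I_n -> set (mpoint R)) (k : 'I_n -> nat),
    (forall i, measurable (B i)) ->
    (forall i j, i != j -> B i `&` B j = set0) ->
    (forall i, (mu (B i) < +oo)%E) ->
    measurable [set w | forall i, has_card (Xi w `&` B i) (k i)] /\
    P [set w | forall i, has_card (Xi w `&` B i) (k i)] =
      (\prod_(i < n) poisson_mass (fine (mu (B i))) (k i))%:E.

Definition weight_law (R : realType) (F : probability R R) : Prop :=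
  F `]0, +oo[%classic = 1%E /\
  exists a : R, 0 < a /\ (\int[F]_x (expR (a * x))%:E < +oo)%E.

(* L(p,q): maximal total weight of a coordinatewise (strictly) increasing finite
   sequence of points of the configuration X in (p1,q1] x (p2,q2]. *)
Definition in_box (R : realType) (p q : R * R) (u : R * R) : Prop :=
  p.1 < u.1 <= q.1 /\ p.2 < u.2 <= q.2.

Definition incr (R : realType) (u v : mpoint R) : bool :=
  (u.1.1 < v.1.1) && (u.1.2 < v.1.2).

Definition LPP (R : realType) (X : set (mpoint R)) (p q : R * R) : \bar R :=
  ereal_sup [set (\sum_(u <- s) u.2)%:E |
               s in [set s : seq (mpoint R) |
                      sorted (@incr R) s /\ forall u, u \in s -> X u /\ in_box p q u.1]].

Definition nuF (R : realType) (nu : set R -> \bar R) (x : R) : \bar R :=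
  if 0 <= x then nu `]0, x]%classic else (- nu `]x, 0%R]%classic)%E.

(* nu is locally finite and liminf_{y -> -oo} nu(y)/y > 0 (equivalently: for some
   c > 0, nu(y)/y >= c for all sufficiently negative y, i.e. nu(y) <= c y). *)
Definition in_calN (R : realType) (nu : {measure set R -> \bar R}) : Prop :=
  (forall a b : R, (nu `[a, b]%classic < +oo)%E) /\
  exists c : R, 0 < c /\ (\forall y \near -oo, (nuF nu y <= (c * y)%:E)%E).

Definition Lnu (R : realType) (X : set (mpoint R)) (nu : set R -> \bar R) (x t : R) : \bar R :=
  ereal_sup [set (nuF nu z + LPP X (z, 0%R) (x, t))%E | z in [set z | z <= x]].

(* M^t_nu((x,y]) = L_nu(y,t) - L_nu(x,t). *)
Definition Mnu (R : realType) (X : set (mpoint R)) (nu : set R -> \bar R) (t x y : R) : \bar R :=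
  (Lnu X nu y t - Lnu X nu x t)%E.

(* M^t_nu([a,b]) = L_nu(b,t) - L_nu(a-,t), with L_nu(a-,t) = sup_{y<a} L_nu(y,t)
   the left limit of the nondecreasing function L_nu(.,t). *)
Definition Mnu_closed (R : realType) (X : set (mpoint R)) (nu : set R -> \bar R) (t a b : R) : \bar R :=
  (Lnu X nu b t - ereal_sup [set Lnu X nu y t | y in [set y : R | (y < a)%R]])%E.

From HB Require Import structures.
From mathcomp Require Import all_boot all_order all_algebra.
From mathcomp Require Import all_classical all_reals all_analysis.
From mathcomp Require Import lra.
Import Order.TTheory GRing.Theory Num.Theory.
Set Implicit Arguments. Unset Strict Implicit. Unset Printing Implicit Defensive.
Local Open Scope classical_set_scope.
Local Open Scope ring_scope.

(* Both parts hold for every configuration of points, hence almost surely.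
   They rest on a crossing argument: if increasing paths start at [z1 <= z2]
   and end at [y >= x], they cross, and exchanging their tails at the crossing
   yields paths from [z1] to [x] and from [z2] to [y] of the same total weight.
   As the increments of [nu] are dominated by those of [nubar], this gives
   [L_nu(y,t) + L_nubar(x,t) <= L_nu(x,t) + L_nubar(y,t)] for [x <= y].
   Cutting a path ending at time [t] at height [s] and applying this crossing
   inequality at the cut point gives the analogous inequality in time,
   [L_nubar(x,t) + L_nu(x,s) <= L_nu(x,t) + L_nubar(x,s)] for [s <= t].
   When [nu] and [nubar] agree on [(-oo,0)], [L_nubar(.,t)] and [L_nu(.,t)]
   differ there by the constant [nubar{0} - nu{0}], which cancels from the
   left limits at [0]. *)

Lemma filter_downclosed_cat (T : eqType) (r : rel T) (p : pred T) (s : seq T) :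
  pairwise r s -> (forall u v, r u v -> p v -> p u) ->
  s = seq.filter p s ++ seq.filter (predC p) s.
Proof.
move=> + p_down; elim: s => [//|u s IH]; rewrite pairwise_cons => /andP[/allP r_u r_s].
case pu: (p u); first by rewrite /= pu /= {1}IH.
have notp v : v \in s -> ~~ p v by move=> vs; apply: contraFN pu; exact: p_down (r_u _ vs).
rewrite /= pu /= (eq_in_filter (a2 := pred0)) ?filter_pred0; last by move=> v /notp /negbTE.
by rewrite (eq_in_filter (a2 := predT)) ?filter_predT // => v /notp.
Qed.

Section Chains.
Variable R : realType.
Implicit Types (u v a b : mpoint R) (A B : seq (mpoint R)).

Lemma incr_trans : transitive (@incr R).
Proof.
move=> v u w /andP[uv1 uv2] /andP[vw1 vw2].
by apply/andP; split; [exact: lt_trans vw1 | exact: lt_trans vw2].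
Qed.

Lemma pairwise_incr_total B u v : pairwise (@incr R) B -> u \in B -> v \in B ->
  [\/ u = v, incr u v | incr v u].
Proof.
elim: B => [//|b B IH]; rewrite pairwise_cons => /andP[/allP incr_b incr_B].
rewrite !inE => /orP[/eqP->|uB] /orP[/eqP->|vB].
- by constructor 1.
- by constructor 2; apply: incr_b.
- by constructor 3; apply: incr_b.
- exact: IH.
Qed.

(* [crossing_split] scans [A] keeping the already scanned prefix [A0] free of
   this configuration. *)
Definition overtakes A0 A B : Prop :=
  exists b, [/\ b \in B, exists2 a0, a0 \in A0 & b.1.1 <= a0.1.1
                       & exists2 a1, a1 \in A & a1.1.2 <= b.1.2].

Lemma incr_blocked a0 a b : incr a0 a -> ~~ incr b a -> ~~ incr a0 b ->
  ~ (b.1.1 <= a0.1.1 /\ a.1.2 <= b.1.2) -> a.1.1 <= b.1.1 /\ b.1.2 < a.1.2.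
Proof.
rewrite /incr => /andP[a0a1 a0a2] + + not_overtaken.
rewrite !negb_and -!leNgt => /orP[ab1|ab2] /orP[ba01|ba02].
- by move: (le_lt_trans ab1 (le_lt_trans ba01 a0a1)); rewrite ltxx.
- by split=> //; exact: le_lt_trans ba02 a0a2.
- by exfalso; apply: not_overtaken.
- by move: (le_lt_trans ab2 (le_lt_trans ba02 a0a2)); rewrite ltxx.
Qed.

Section Crossing.
Variables (z x : R) (B : seq (mpoint R)).
Hypothesis z_le_x : z <= x.
Hypothesis B_chain : pairwise (@incr R) B.
Hypothesis B_strip : forall b, b \in B -> z < b.1.1 <= x.

Lemma cut_blocked A0 a A a0 b : pairwise (@incr R) (A0 ++ a :: A) ->
  ~ overtakes A0 (a :: A) B -> a0 \in A0 -> b \in B -> ~~ incr b a -> ~~ incr a0 b ->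
  a.1.1 <= b.1.1 /\ b.1.2 < a.1.2.
Proof.
rewrite pairwise_cat => /and3P[/allrelP A0_a _ _] free a0A0 bB not_ba not_a0b.
apply: incr_blocked not_ba not_a0b _; first by apply: A0_a; rewrite ?inE ?eqxx.
move=> [ba0 ab]; apply: free; exists b; split=> //; first by exists a0.
by exists a; rewrite ?inE ?eqxx.
Qed.

Lemma not_overtakes_rcons A0 a A :
  pairwise (@incr R) (A0 ++ a :: A) -> ~ overtakes A0 (a :: A) B ->
  (z < a.1.1 -> ~~ allrel (@incr R) A0 [seq b <- B | ~~ incr b a]) ->
  ~ overtakes (rcons A0 a) A B.
Proof.
move=> chain free cut_fails [b [bB [a0 a0A0a ba0] [a1 a1A a1b]]].
have a_a1 : incr a a1.
  by move: chain; rewrite pairwise_cat pairwise_cons => /and3P[_ _ /andP[/allP-> //]].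
move: a0A0a; rewrite mem_rcons inE => /orP[/eqP a0a|a0A0]; last first.
  apply: free; exists b; split=> //; first by exists a0.
  by exists a; rewrite ?inE ?eqxx //; exact: le_trans (ltW (andP a_a1).2) a1b.
subst a0; have /allPn[a0 a0A0 /allPn[b' /[!mem_filter]/andP[not_b'a b'B] not_a0b']] :=
  cut_fails (lt_le_trans (andP (B_strip bB)).1 ba0).
have [ab' b'a] := cut_blocked chain free a0A0 b'B not_b'a not_a0b'.
have b'b : b'.1.2 < b.1.2 by exact: lt_le_trans b'a (le_trans (ltW (andP a_a1).2) a1b).
case: (pairwise_incr_total B_chain bB b'B) => [ebb'|/andP[_ bb']|/andP[b'b1 _]].
- by rewrite ebb' ltxx in b'b.
- by move: (lt_trans bb' b'b); rewrite ltxx.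
- by move: (lt_le_trans b'b1 (le_trans ba0 ab')); rewrite ltxx.
Qed.

(* [A] is cut before the first point [a] right of [z] such that the scanned
   prefix precedes every point of [B] not below-left of [a]; the invariant
   shows that no scanned point lies right of [x]. *)
Lemma crossing_split A0 A : pairwise (@incr R) (A0 ++ A) ->
  all (fun a => a.1.1 <= x) A0 -> ~ overtakes A0 A B ->
  exists A1 A2 B1 B2, [/\ A = A1 ++ A2, B = B1 ++ B2,
    all (fun a => a.1.1 <= x) A1, all (fun a => z < a.1.1) A2 &
    allrel (@incr R) (A0 ++ A1) B2 /\ allrel (@incr R) B1 A2].
Proof.
elim: A A0 => [|a A IH] A0 chain A0_left free.
  by exists [::], [::], B, [::]; rewrite !cats0 !allrel0r; split.
set B2 := [seq b <- B | ~~ incr b a].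
have a_A : all (incr a) A.
  by move: chain; rewrite pairwise_cat pairwise_cons => /and3P[_ _ /andP[]].
have [[za cut_ok]|cut_fails] := pselect (z < a.1.1 /\ allrel (@incr R) A0 B2).
  exists [::], (a :: A), [seq b <- B | incr b a], B2; split.
  - by [].
  - by apply: (filter_downclosed_cat B_chain) => u v uv va; exact: incr_trans uv va.
  - by [].
  - by rewrite /= za; apply/allP => v /(allP a_A)/andP[av _]; exact: lt_trans za av.
  - split; first by rewrite cats0.
    apply/allrelP => b v /[!mem_filter]/andP[ba _]; rewrite inE => /orP[/eqP->//|vA].
    exact: incr_trans ba (allP a_A _ vA).
have cut_fails' : z < a.1.1 -> ~~ allrel (@incr R) A0 B2.
  by move=> za; apply/negP => ok; apply: cut_fails.
have ax : a.1.1 <= x.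
  rewrite leNgt; apply/negP => xa; have za := le_lt_trans z_le_x xa.
  have /allPn[a0 a0A0 /allPn[b /[!mem_filter]/andP[not_ba bB] not_a0b]] := cut_fails' za.
  have [ab _] := cut_blocked chain free a0A0 bB not_ba not_a0b.
  by move: (lt_le_trans xa (le_trans ab (andP (B_strip bB)).2)); rewrite ltxx.
have chain' : pairwise (@incr R) (rcons A0 a ++ A) by rewrite cat_rcons.
have A0a_left : all (fun a => a.1.1 <= x) (rcons A0 a) by rewrite all_rcons ax A0_left.
have [A1 [A2 [B1 [B2' [eA eB A1_left A2_right [A1_B2 B1_A2]]]]]] :=
  IH _ chain' A0a_left (not_overtakes_rcons chain free cut_fails').
exists (a :: A1), A2, B1, B2'; split=> //; first by rewrite eA.
- by rewrite /= ax.
- by rewrite -cat_rcons.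
Qed.

End Crossing.
End Chains.

Section Paths.
Variables (R : realType) (X : set (mpoint R)).
Implicit Types (z x y t : R) (C : seq (mpoint R)).

Definition weight C : R := \sum_(u <- C) u.2.

Lemma weight_cat C C' : weight (C ++ C') = weight C + weight C'.
Proof. exact: big_cat. Qed.

Definition inc_path z x t C : Prop :=
  sorted (@incr R) C /\ forall u, u \in C -> X u /\ in_box (z, 0) (x, t) u.1.

Lemma inc_path_widen z x x' t t' C : x <= x' -> t <= t' ->
  inc_path z x t C -> inc_path z x' t' C.
Proof.
move=> xx' tt' [sC inC]; split=> // u /inC [Xu [/andP[zu ux] /andP[u0 ut]]].
by split=> //; split; apply/andP; split=> //; [exact: le_trans xx' | exact: le_trans tt'].
Qed.

Lemma inc_path_crossing z1 z2 x y t A B :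
  z1 <= z2 -> z2 <= x -> x <= y -> inc_path z1 y t A -> inc_path z2 x t B ->
  exists A' B', [/\ inc_path z1 x t A', inc_path z2 y t B'
                  & weight A' + weight B' = weight A + weight B].
Proof.
move=> z12 z2x xy [sA inA] [sB inB].
rewrite sorted_pairwise in sA; last exact: incr_trans.
rewrite sorted_pairwise in sB; last exact: incr_trans.
have B_strip b : b \in B -> z2 < b.1.1 <= x.
  by move=> /inB [_ [/andP[-> ->] _]].
have free : ~ overtakes [::] A B by move=> [b [_ []]].
have [A1 [A2 [B1 [B2 [eA eB A1_left A2_right [A1_B2 B1_A2]]]]]] :=
  crossing_split z2x sB B_strip (A0 := [::]) sA isT free.
move: sA sB; rewrite eA eB !pairwise_cat => /and3P[_ pA1 pA2] /and3P[_ pB1 pB2].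
have inA1 u : u \in A1 -> X u /\ in_box (z1, 0) (x, t) u.1.
  move=> uA1; have /inA [Xu [/= /andP[zu _] ut]] : u \in A by rewrite eA mem_cat uA1.
  by split=> //; split=> //=; rewrite zu (allP A1_left _ uA1).
have inB2 u : u \in B2 -> X u /\ in_box (z1, 0) (x, t) u.1.
  move=> uB2; have /inB [Xu [/= /andP[zu ux] ut]] : u \in B by rewrite eB mem_cat uB2 orbT.
  by split=> //; split=> //=; rewrite (le_lt_trans z12 zu) ux.
have inB1 u : u \in B1 -> X u /\ in_box (z2, 0) (y, t) u.1.
  move=> uB1; have /inB [Xu [/= /andP[zu ux] ut]] : u \in B by rewrite eB mem_cat uB1.
  by split=> //; split=> //=; rewrite zu (le_trans ux xy).
have inA2 u : u \in A2 -> X u /\ in_box (z2, 0) (y, t) u.1.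
  move=> uA2; have /inA [Xu [/= /andP[_ uy] ut]] : u \in A by rewrite eA mem_cat uA2 orbT.
  by split=> //; split=> //=; rewrite (allP A2_right _ uA2) uy.
exists (A1 ++ B2), (B1 ++ A2); split.
- split; first by rewrite sorted_pairwise ?pairwise_cat ?A1_B2 ?pA1 //; exact: incr_trans.
  by move=> u; rewrite mem_cat => /orP[/inA1|/inB2].
- split; first by rewrite sorted_pairwise ?pairwise_cat ?B1_A2 ?pB1 //; exact: incr_trans.
  by move=> u; rewrite mem_cat => /orP[/inB1|/inA2].
- by rewrite !weight_cat; lra.
Qed.

Lemma inc_path_nil z x t : inc_path z x t [::].
Proof. by []. Qed.

Section LastPassageSup.
Variable nu : set R -> \bar R.
Hypothesis nuF_fin : forall z, nuF nu z \is a fin_num.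
Local Open Scope ereal_scope.

Lemma le_Lnu z x t C : (z <= x)%R -> inc_path z x t C ->
  (fine (nuF nu z) + weight C)%:E <= Lnu X nu x t.
Proof.
move=> zx pC; rewrite EFinD fineK //.
apply: (@le_trans _ _ (nuF nu z + LPP X (z, 0%R) (x, t))).
  by apply: leeD2l; apply: ereal_sup_ubound; exists C.
by apply: ereal_sup_ubound; exists z.
Qed.

Lemma Lnu_le x t M :
  (forall z C, (z <= x)%R -> inc_path z x t C -> (fine (nuF nu z) + weight C)%:E <= M) ->
  Lnu X nu x t <= M.
Proof.
move=> le_M; apply: ge_ereal_sup => _ [z zx <-].
rewrite -leeBrDl //; apply: ge_ereal_sup => _ [C pC <-].
by rewrite leeBrDl // -(fineK (nuF_fin z)) -EFinD; exact: le_M.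
Qed.

Lemma LnuDr_le x t K M : K != -oo ->
  (forall z C, (z <= x)%R -> inc_path z x t C -> (fine (nuF nu z) + weight C)%:E + K <= M) ->
  Lnu X nu x t + K <= M.
Proof.
case: K => [k| |//] _ le_M.
  by rewrite -leeBrDr //; apply: Lnu_le => z C zx pC; rewrite leeBrDr //; exact: le_M.
have := le_M x [::] (lexx x) (inc_path_nil x x t).
by rewrite addey // leye_eq => /eqP ->; exact: leey.
Qed.

Lemma Lnu_neqNy x t : Lnu X nu x t != -oo.
Proof.
apply/eqP => LNy; have := le_Lnu (lexx x) (inc_path_nil x x t).
by rewrite LNy leeNy_eq.
Qed.

Lemma Lnu_homo x x' t t' : (x <= x')%R -> (t <= t')%R -> Lnu X nu x t <= Lnu X nu x' t'.
Proof.
move=> xx' tt'; apply: Lnu_le => z C zx pC.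
by apply: le_Lnu; [exact: le_trans xx' | exact: inc_path_widen pC].
Qed.

Lemma LnuD_weight_le m x s t C : (m <= x)%R -> (s <= t)%R ->
  inc_path m x t C -> (forall u, u \in C -> (s < u.1.2)%R) ->
  Lnu X nu m s + (weight C)%:E <= Lnu X nu x t.
Proof.
move=> mx st [sC inC] C_high; apply: LnuDr_le => // z C' zm [sC' inC'].
rewrite -EFinD -addrA -weight_cat; apply: le_Lnu; first exact: le_trans zm mx.
split.
  rewrite sorted_pairwise ?pairwise_cat; last exact: incr_trans.
  rewrite -!sorted_pairwise ?sC ?sC' ?andbT //; try exact: incr_trans.
  apply/allrelP => u v /inC' [_ [/andP[_ um] /andP[_ us]]] vC.
  have [_ [/andP[mv _] _]] := inC _ vC.
  by apply/andP; split; [exact: le_lt_trans mv | exact: le_lt_trans (C_high _ vC)].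
move=> u; rewrite mem_cat.
case/orP => [/inC' [Xu [/andP[zu um] /andP[u0 us]]]|/inC [Xu [/andP[mu ux] ut]]].
  by split=> //; split; apply/andP; split=> //; [exact: le_trans mx | exact: le_trans st].
by split=> //; split=> //; apply/andP; split=> //; exact: le_lt_trans zm mu.
Qed.

End LastPassageSup.

Section Comparison.
Variables nu nubar : set R -> \bar R.
Hypothesis nuF_fin : forall z, nuF nu z \is a fin_num.
Hypothesis nubarF_fin : forall z, nuF nubar z \is a fin_num.
Hypothesis nuF_incr_le : forall a b, a <= b ->
  fine (nuF nu b) - fine (nuF nu a) <= fine (nuF nubar b) - fine (nuF nubar a).
Local Open Scope ereal_scope.

Lemma LnuD_nuF_le x t : Lnu X nubar x t + nuF nu x <= Lnu X nu x t + nuF nubar x.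
Proof.
apply: LnuDr_le => [//||z C zx pC]; first by have /fin_numP[] := nuF_fin x.
rewrite -(fineK (nuF_fin x)) -(fineK (nubarF_fin x)) -EFinD.
apply: le_trans (leeD2r _ (le_Lnu nuF_fin zx pC)).
by rewrite -EFinD lee_fin; have := nuF_incr_le zx; lra.
Qed.

Lemma Lnu_crossing_x x y t : (x <= y)%R ->
  Lnu X nu y t + Lnu X nubar x t <= Lnu X nu x t + Lnu X nubar y t.
Proof.
move=> xy; apply: LnuDr_le => [//||z1 C1 z1y pC1]; first exact: Lnu_neqNy.
rewrite addeC; apply: LnuDr_le => // z2 C2 z2x pC2; rewrite -EFinD.
have [z21|z12] := leP z2 z1.
- apply: (@le_trans _ _ ((fine (nuF nu z2) + weight C2)%:E
                          + (fine (nuF nubar z1) + weight C1)%:E)).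
    by rewrite -EFinD lee_fin; have := nuF_incr_le z21; lra.
  exact: leeD (le_Lnu nuF_fin z2x pC2) (le_Lnu nubarF_fin z1y pC1).
- have [A' [B' [pA' pB' eW]]] := inc_path_crossing (ltW z12) z2x xy pC1 pC2.
  apply: (@le_trans _ _ ((fine (nuF nu z1) + weight A')%:E
                          + (fine (nuF nubar z2) + weight B')%:E)).
    by rewrite -EFinD lee_fin; lra.
  apply: leeD; first exact: le_Lnu (le_trans (ltW z12) z2x) pA'.
  exact: le_Lnu (le_trans z2x xy) pB'.
Qed.

Lemma Lnu_crossing_t x s t : (s <= t)%R ->
  Lnu X nubar x t + Lnu X nu x s <= Lnu X nu x t + Lnu X nubar x s.
Proof.
move=> st; apply: LnuDr_le => [//||z C zx [sC inC]]; first exact: Lnu_neqNy.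
have pC : pairwise (@incr R) C by rewrite -sorted_pairwise //; exact: incr_trans.
pose low := fun u : mpoint R => (u.1.2 <= s)%R.
have eC : C = seq.filter low C ++ seq.filter (predC low) C.
  apply: (filter_downclosed_cat pC) => u v /andP[_ uv] vs; exact: le_trans (ltW uv) vs.
set C1 := seq.filter low C; set C2 := seq.filter (predC low) C.
have /and3P[C1_C2 pC1 pC2] :
    [&& allrel (@incr R) C1 C2, pairwise (@incr R) C1 & pairwise (@incr R) C2].
  by rewrite -pairwise_cat -eC.
set m := \big[Order.max/z]_(u <- C1) u.1.1.
have C1_le_m u : u \in C1 -> (u.1.1 <= m)%R by move=> uC1; exact: le_bigmax_seq uC1 _.
have mx : (m <= x)%R.
  rewrite /m big_seq; apply: bigmax_le => // u.
  by rewrite mem_filter => /andP[_ /inC [_ [/andP[_ ->] _]]].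
have m_lt_C2 v : v \in C2 -> (m < v.1.1)%R.
  move=> vC2; rewrite /m big_seq; apply: bigmax_lt => [|u uC1].
    by move: vC2; rewrite mem_filter => /andP[_ /inC [_ [/andP[] //]]].
  by have /andP[] := allrelP C1_C2 _ _ uC1 vC2.
have pathC1 : inc_path z m s C1.
  split; first by rewrite sorted_pairwise //; exact: incr_trans.
  move=> u uC1; have := uC1; rewrite mem_filter => /andP[us /inC [Xu [/andP[zu _] /andP[u0 _]]]].
  by split=> //; split; apply/andP; split=> //; exact: C1_le_m.
have pathC2 : inc_path m x t C2.
  split; first by rewrite sorted_pairwise //; exact: incr_trans.
  move=> u uC2; have := uC2; rewrite mem_filter => /andP[_ /inC [Xu [/andP[_ ux] ut]]].
  by split=> //; split=> //; rewrite m_lt_C2.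
have C2_high u : u \in C2 -> (s < u.1.2)%R by rewrite mem_filter /= -ltNge => /andP[].
have -> : weight C = (weight C1 + weight C2)%R by rewrite {1}eC weight_cat.
rewrite addrA EFinD.
apply: (@le_trans _ _ (Lnu X nubar m s + (weight C2)%:E + Lnu X nu x s)).
  by apply: leeD2r; apply: leeD2r; apply: (le_Lnu nubarF_fin _ pathC1); exact: bigmax_ge_id.
rewrite addeAC (addeC (Lnu X nubar m s)).
apply: (@le_trans _ _ (Lnu X nu m s + Lnu X nubar x s + (weight C2)%:E)).
  exact: leeD2r (Lnu_crossing_x s mx).
by rewrite addeAC; apply: leeD2r; apply: (LnuD_weight_le nuF_fin mx st pathC2 C2_high).
Qed.

End Comparison.
End Paths.

Section CountingFunction.
Variable R : realType.
Implicit Types (a b m z : R).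

Lemma measure_itv_ocU (mu : {measure set R -> \bar R}) a m b : a <= m -> m <= b ->
  mu `]a, b]%classic = (mu `]a, m]%classic + mu `]m, b]%classic)%E.
Proof.
move=> am mb; rewrite (@itv_bndbnd_setU _ _ (BRight a) (BRight m) (BRight b)) ?bnd_simp //.
apply: measureU; try exact: measurable_itv.
apply/seteqP; split=> u //=; rewrite !in_itv /= => -[/andP[_ um] /andP[mu' _]].
by move: (le_lt_trans um mu'); rewrite ltxx.
Qed.

Variable nu : {measure set R -> \bar R}.
Hypothesis nu_locfin : forall a b, (nu `[a, b]%classic < +oo)%E.

Lemma measure_fin_num_sub (A : set R) a b : measurable A -> A `<=` `[a, b]%classic ->
  nu A \is a fin_num.
Proof.
move=> mA Aab; rewrite ge0_fin_numE ?measure_ge0 //; apply: le_lt_trans (nu_locfin a b).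
by apply: le_measure => //; rewrite inE //; exact: measurable_itv.
Qed.

Lemma measure_itv_oc_fin_num a b : nu `]a, b]%classic \is a fin_num.
Proof.
apply: (@measure_fin_num_sub _ a b); first exact: measurable_itv.
by move=> u /=; rewrite !in_itv /= => /andP[au ub]; rewrite (ltW au) ub.
Qed.

Lemma nuF_fin_num z : nuF nu z \is a fin_num.
Proof. by rewrite /nuF; case: ifP => _; rewrite ?fin_numN measure_itv_oc_fin_num. Qed.

Lemma nuF_sub a b : a <= b -> fine (nuF nu b) - fine (nuF nu a) = fine (nu `]a, b]%classic).
Proof.
have fin := measure_itv_oc_fin_num.
move=> ab; rewrite /nuF; case: ifPn => b0; case: ifPn => a0.
- by rewrite (measure_itv_ocU _ a0 ab) fineD //; lra.
- by rewrite -ltNge in a0; rewrite (measure_itv_ocU _ (ltW a0) b0) fineN fineD //; lra.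
- by move: b0; rewrite (le_trans a0 ab).
- rewrite -ltNge in a0; rewrite -ltNge in b0.
  by rewrite (measure_itv_ocU _ ab (ltW b0)) !fineN fineD //; lra.
Qed.

Lemma nuF_neg z : z < 0 ->
  fine (nuF nu z) = - fine (nu `]z, 0[%classic) - fine (nu [set 0]).
Proof.
move=> z0; rewrite /nuF ifF; last by apply/negbTE; rewrite -ltNge.
rewrite -(@setUitv1 _ _ (BRight z) 0 true) ?bnd_simp // measureU.
- rewrite fineN fineD; first lra.
  + apply: (@measure_fin_num_sub _ z 0); first exact: measurable_itv.
    by move=> u /=; rewrite !in_itv /= => /andP[zu u0]; rewrite (ltW zu) (ltW u0).
  + apply: (@measure_fin_num_sub _ z 0); first exact: measurable_set1.
    by move=> u /= ->; rewrite in_itv /= (ltW z0) lexx.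
- exact: measurable_itv.
- exact: measurable_set1.
- apply/seteqP; split=> u //= []; rewrite in_itv /= => /andP[_ u0] eu.
  by move: u0; rewrite eu ltxx.
Qed.

End CountingFunction.

Lemma nuF_incr_le (R : realType) (nu nubar : {measure set R -> \bar R}) :
  (forall a b : R, (nu `[a, b]%classic < +oo)%E) ->
  (forall a b : R, (nubar `[a, b]%classic < +oo)%E) ->
  (forall I : set R, measurable I -> (nu I <= nubar I)%E) ->
  forall a b, a <= b ->
  fine (nuF nu b) - fine (nuF nu a) <= fine (nuF nubar b) - fine (nuF nubar a).
Proof.
move=> nu_locfin nubar_locfin nu_le a b ab; rewrite !nuF_sub //.
apply: fine_le; try exact: measure_itv_oc_fin_num.
by apply: nu_le; exact: measurable_itv.
Qed.

Lemma nuF_neg_shift (R : realType) (nu nubar : {measure set R -> \bar R}) :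
  (forall a b : R, (nu `[a, b]%classic < +oo)%E) ->
  (forall a b : R, (nubar `[a, b]%classic < +oo)%E) ->
  (forall I : set R, measurable I -> I `<=` `]-oo, 0[%classic -> nu I = nubar I) ->
  forall z, z < 0 ->
  fine (nuF nubar z) + (fine (nubar [set 0]) - fine (nu [set 0])) = fine (nuF nu z).
Proof.
move=> nu_locfin nubar_locfin nu_eq z z0; rewrite !nuF_neg // (nu_eq `]z, 0[%classic).
- lra.
- exact: measurable_itv.
- by move=> u /=; rewrite !in_itv /= => /andP[].
Qed.

Section LeftLimit.
Variables (R : realType) (X : set (mpoint R)).
Local Open Scope ereal_scope.

Definition Lnu_left (mu : set R -> \bar R) (a t : R) : \bar R :=
  ereal_sup [set Lnu X mu y t | y in [set y : R | (y < a)%R]].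

Section OneMeasure.
Variable mu : set R -> \bar R.
Hypothesis muF_fin : forall z, nuF mu z \is a fin_num.

Lemma Lnu_left_le a x t : (a <= x)%R -> Lnu_left mu a t <= Lnu X mu x t.
Proof.
move=> ax; apply: ge_ereal_sup => _ [y ya <-].
exact: Lnu_homo (le_trans (ltW ya) ax) (lexx t).
Qed.

Lemma Lnu_left_homo a s t : (s <= t)%R -> Lnu_left mu a s <= Lnu_left mu a t.
Proof.
move=> st; apply: ge_ereal_sup => _ [y ya <-].
apply: le_trans (Lnu_homo X muF_fin (lexx y) st) _.
by apply: ereal_sup_ubound; exists y.
Qed.

Lemma Lnu_left_neqNy a t : Lnu_left mu a t != -oo.
Proof.
apply/eqP => LNy; have : Lnu X mu (a - 1) t <= Lnu_left mu a t.
  by apply: ereal_sup_ubound; exists (a - 1)%R => //=; rewrite ltrBlDr ltrDl.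
by rewrite LNy leeNy_eq; apply/negP; exact: Lnu_neqNy.
Qed.

End OneMeasure.

Section Shift.
Variables (nu nubar : set R -> \bar R) (a c : R).
Hypothesis nuF_fin : forall z, nuF nu z \is a fin_num.
Hypothesis nubarF_fin : forall z, nuF nubar z \is a fin_num.
Hypothesis nuF_shift : forall z, (z < a)%R -> (fine (nuF nubar z) + c)%R = fine (nuF nu z).

Lemma LnuD_shift y t : (y < a)%R -> Lnu X nubar y t + c%:E = Lnu X nu y t.
Proof.
move=> ya; apply/eqP; rewrite eq_le; apply/andP; split.
- apply: LnuDr_le => // z C zy pC.
  rewrite -EFinD -addrAC nuF_shift; last exact: le_lt_trans zy ya.
  exact: (le_Lnu nuF_fin zy pC).
- apply: (Lnu_le nuF_fin) => z C zy pC.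
  rewrite -nuF_shift; last exact: le_lt_trans zy ya.
  rewrite addrAC EFinD; apply: leeD2r; exact: (le_Lnu nubarF_fin zy pC).
Qed.

Lemma Lnu_leftD_shift t : Lnu_left nubar a t + c%:E = Lnu_left nu a t.
Proof.
apply/eqP; rewrite eq_le; apply/andP; split.
- rewrite -leeBrDr //; apply: ge_ereal_sup => _ [y ya <-].
  rewrite leeBrDr // LnuD_shift //; apply: ereal_sup_ubound; by exists y.
- apply: ge_ereal_sup => _ [y ya <-]; rewrite -LnuD_shift //.
  apply: leeD2r; apply: ereal_sup_ubound; by exists y.
Qed.

End Shift.
End LeftLimit.

Section ExtendedArithmetic.
Variable R : realType.
Local Open Scope ereal_scope.

(* The finite bound [c + p <= a + q] makes [c] infinite only together with
   [a], which rules out [+oo - +oo] on the right-hand side. *)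
Lemma leeBB_of_cross (a b c d : \bar R) (p q : R) :
  a != -oo -> c != -oo -> a <= b -> b + c <= a + d -> c + p%:E <= a + q%:E ->
  b - a <= d - c.
Proof.
case: a => [a| |] // _ c_fin ab cross cpaq; last first.
  by move: ab; rewrite leye_eq => /eqP ->; exact: leNye.
case: c c_fin cross cpaq => [c| |] // _ cross _.
case: b ab cross => [b| |] // _; last by case: d.
case: d => [d| |] // cross; last by rewrite leey.
by rewrite -!EFinB lee_fin; rewrite -!EFinD lee_fin in cross; lra.
Qed.

Lemma leeBB_shifted (Lt Lbt St Sbt Ls Lbs Ss Sbs : \bar R) (c p q : R) :
  Ls != -oo -> Lbs != -oo -> Ss != -oo ->
  St <= Lt -> Sbt <= Lbt -> Ss <= St -> Ls <= Lt -> Lbs <= Lbt ->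
  Sbt + c%:E = St -> Sbs + c%:E = Ss ->
  Lbt + Ls <= Lt + Lbs -> Lbt + p%:E <= Lt + q%:E ->
  (Lbt - Sbt) - (Lt - St) <= (Lbs - Sbs) - (Ls - Ss).
Proof.
move=> Ls_fin Lbs_fin Ss_fin StLt SbtLbt SsSt LsLt LbsLbt eSt eSs cross cross_fin.
case: St StLt SsSt eSt => [St| |] StLt SsSt eSt; last first.
- by move: SsSt; rewrite leeNy_eq => /eqP SsNy; rewrite SsNy in Ss_fin.
- have Sbty : Sbt = +oo by case: Sbt eSt SbtLbt.
  rewrite Sbty in SbtLbt; move: StLt SbtLbt; rewrite !leye_eq => /eqP -> /eqP ->.
  by rewrite Sbty; exact: leNye.
case: Lt StLt LsLt cross cross_fin => [Lt| |] StLt LsLt cross cross_fin; last 2 first.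
- by rewrite addeNy; exact: leNye.
- by [].
case: Lbt SbtLbt LbsLbt cross cross_fin => [Lbt| |] SbtLbt LbsLbt cross cross_fin; last 2 first.
- by [].
- by rewrite !addNye; exact: leNye.
case: Sbt SbtLbt eSt => [Sbt| |] // _ eSt.
case: Ls Ls_fin LsLt cross => [Ls| |] // _ _ cross.
case: Lbs Lbs_fin LbsLbt cross => [Lbs| |] // _ _ cross.
case: Ss Ss_fin SsSt eSs => [Ss| |] // _ _ eSs.
case: Sbs eSs => [Sbs| |] // eSs.
rewrite -!EFinB lee_fin.
by move: eSt eSs cross; rewrite -!EFinD => -[eSt] [eSs]; rewrite lee_fin => cross; lra.
Qed.

End ExtendedArithmetic.

Section Monotonicity.
Variables (R : realType) (X : set (mpoint R)) (nu nubar : {measure set R -> \bar R}).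
Hypothesis nu_locfin : forall a b : R, (nu `[a, b]%classic < +oo)%E.
Hypothesis nubar_locfin : forall a b : R, (nubar `[a, b]%classic < +oo)%E.
Hypothesis nu_le_nubar : forall I : set R, measurable I -> (nu I <= nubar I)%E.

Let nuF_fin := nuF_fin_num nu_locfin.
Let nubarF_fin := nuF_fin_num nubar_locfin.
Let nuF_incr := nuF_incr_le nu_locfin nubar_locfin nu_le_nubar.

Lemma Mnu_le_Mnu t x y : x <= y -> (Mnu X nu t x y <= Mnu X nubar t x y)%E.
Proof.
move=> xy; apply: (@leeBB_of_cross _ _ _ _ _ (fine (nuF nu x)) (fine (nuF nubar x))).
- exact: Lnu_neqNy.
- exact: Lnu_neqNy.
- exact: Lnu_homo.
- exact: Lnu_crossing_x.
- by rewrite !fineK //; exact: LnuD_nuF_le.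
Qed.

Hypothesis nu_eq_nubar_neg :
  forall I : set R, measurable I -> I `<=` `]-oo, 0[%classic -> nu I = nubar I.

Lemma Mnu_closed_gap_nonincr x s t : 0 <= x -> s <= t ->
  (Mnu_closed X nubar t 0 x - Mnu_closed X nu t 0 x
     <= Mnu_closed X nubar s 0 x - Mnu_closed X nu s 0 x)%E.
Proof.
move=> x0 st; have nuF_shift := nuF_neg_shift nu_locfin nubar_locfin nu_eq_nubar_neg.
apply: (@leeBB_shifted _ _ _ (Lnu_left X nu 0 t) (Lnu_left X nubar 0 t) _ _
          (Lnu_left X nu 0 s) (Lnu_left X nubar 0 s) (fine (nubar [set 0]) - fine (nu [set 0]))
          (fine (nuF nu x)) (fine (nuF nubar x))).
- exact: Lnu_neqNy.
- exact: Lnu_neqNy.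
- exact: Lnu_left_neqNy.
- exact: Lnu_left_le.
- exact: Lnu_left_le.
- exact: Lnu_left_homo.
- exact: Lnu_homo.
- exact: Lnu_homo.
- exact: Lnu_leftD_shift.
- exact: Lnu_leftD_shift.
- exact: Lnu_crossing_t.
- by rewrite !fineK //; exact: LnuD_nuF_le.
Qed.

End Monotonicity.

Unset Implicit Arguments. Set Strict Implicit.

Theorem proposition3p9 (R : realType) (d : measure_display) (Omega : measurableType d)
  (P : probability Omega R) (F : probability R R) (Xi : Omega -> set (mpoint R))
  (nu nubar : {measure set R -> \bar R}) :
  weight_law F ->
  poisson_process P (intensity F) Xi ->
  in_calN nu -> in_calN nubar ->
  (forall I : set R, measurable I -> (nu I <= nubar I)%E) ->
  {ae P, forall w, forall t : R, 0 <= t -> forall x y : R, x <= y ->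
      (Mnu (Xi w) nu t x y <= Mnu (Xi w) nubar t x y)%E}
  /\
  ((forall I : set R, measurable I -> I `<=` `]-oo, 0[%classic -> nu I = nubar I) ->
   {ae P, forall w, forall x : R, 0 <= x -> forall s t : R, 0 <= s -> s <= t ->
      (Mnu_closed (Xi w) nubar t 0 x - Mnu_closed (Xi w) nu t 0 x
        <= Mnu_closed (Xi w) nubar s 0 x - Mnu_closed (Xi w) nu s 0 x)%E}).
Proof.
(* The comparison holds for every configuration of points: the law of the
   weights, the Poisson property and the growth condition of [N] are unused. *)
move=> _ _ [nu_locfin _] [nubar_locfin _] nu_le; split.
  by apply: aeW => w t _ x y; exact: Mnu_le_Mnu.
by move=> nu_eq; apply: aeW => w x x0 s t _; exact: Mnu_closed_gap_nonincr.
Qed.
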